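(* Let $(A,\succ_A,\prec_A)$ be an anti-pre-Leibniz algebra and define $$x\vdash_A y=x\succ_A y+2\,x\prec_A y,\qquad x\dashv_A y=-y\prec_A x-2\,y\succ_A x,\quad\forall x,y\in A.$$ Then $(A,\vdash_A,\dashv_A)$ satisfies (ND1), (ND2), (ND3) (i.e. is a transformed pre-Leibniz algebra) if and only if $(A,\succ_A,\prec_A)$ is an admissible Novikov dialgebra. Moreover, in this case $(A,\vdash_A,\dashv_A)$ is a Novikov dialgebra.
   Context: All vector spaces are over a field $\mathbb K$ of characteristic zero. Identities for multiplications $\vdash_A,\dashv_A$, for all $x,y,z$: (ND1) $x\vdash_A(y\vdash_A z)=(x\vdash_A y)\vdash_A z-(y\dashv_A x)\vdash_A z+y\vdash_A(x\vdash_A z)$; (ND2) $(y\vdash_A z)\dashv_A x=y\vdash_A(z\dashv_A x)-z\dashv_A(y\vdash_A x)+(z\dashv_A y)\dashv_A x$; (ND3) $z\dashv_A(x\vdash_A y)=z\dashv_A(x\dashv_A y)$; (ND4) $(z\dashv_A y)\dashv_A x=(z\dashv_A x)\dashv_A y$; (ND5) $(y\dashv_A x)\vdash_A z=(y\vdash_A z)\dashv_A x=(y\vdash_A x)\vdash_A z$. A Novikov dialgebra is $(A,\vdash_A,\dashv_A)$ satisfying (ND1)–(ND5). For multiplications $\succ_A,\prec_A$ set $x\circ_A y=x\succ_A y+x\prec_A y$. Identities: (AL1) $(x\circ_A y)\prec_A z=x\succ_A(y\circ_A z)-y\succ_A(x\circ_A z)$; (AL2) $(x\circ_A y)\succ_A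 z=y\succ_A(x\succ_A z)-x\succ_A(y\succ_A z)$; (AL3) $x\prec_A(y\circ_A z)=(y\succ_A x)\prec_A z-y\succ_A(x\prec_A z)$; (AL4) $(x\succ_A y)\prec_A z=-(y\prec_A x)\prec_A z$; (AN1) $(x\succ_A y)\succ_A z=-(y\prec_A x)\succ_A z$; (AN2) $x\prec_A(y\prec_A z)-y\prec_A(x\prec_A z)=2(x\prec_A y)\prec_A z-2(y\prec_A x)\prec_A z$; (AN3) $(x\succ_A y)\succ_A z+y\prec_A(x\succ_A z)=2x\succ_A(y\circ_A z)$. An anti-pre-Leibniz algebra satisfies (AL1)–(AL4); an admissible Novikov dialgebra satisfies (AL2)–(AL4) and (AN1)–(AN3). *)

From mathcomp Require Import all_boot all_algebra.
Set Implicit Arguments. Unset Strict Implicit. Unset Printing Implicit Defensive.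
Import GRing.Theory.
Local Open Scope ring_scope.

Definition bilinear_mul (K : fieldType) (A : lmodType K) (m : A -> A -> A) : Prop :=
  (forall (a : K) (x y z : A), m (a *: x + y) z = a *: m x z + m y z) /\
  (forall (a : K) (x y z : A), m x (a *: y + z) = a *: m x y + m x z).

Section Identities.
Variables (K : fieldType) (A : lmodType K).

(* Novikov dialgebra identities, with vd = |- and dv = -| *)
Definition ND1 (vd dv : A -> A -> A) := forall x y z,
  vd x (vd y z) = vd (vd x y) z - vd (dv y x) z + vd y (vd x z).
Definition ND2 (vd dv : A -> A -> A) := forall x y z,
  dv (vd y z) x = vd y (dv z x) - dv z (vd y x) + dv (dv z y) x.
Definition ND3 (vd dv : A -> A -> A) := forall x y z,
  dv z (vd x y) = dv z (dv x y).
Definition ND4 (vd dv : A -> A -> A) := forall x y z,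
  dv (dv z y) x = dv (dv z x) y.
Definition ND5 (vd dv : A -> A -> A) := forall x y z,
  vd (dv y x) z = dv (vd y z) x /\ dv (vd y z) x = vd (vd y x) z.

Definition transformed_pre_Leibniz (vd dv : A -> A -> A) :=
  ND1 vd dv /\ ND2 vd dv /\ ND3 vd dv.
Definition Novikov_dialgebra (vd dv : A -> A -> A) :=
  ND1 vd dv /\ ND2 vd dv /\ ND3 vd dv /\ ND4 vd dv /\ ND5 vd dv.

Definition circ (succ prec : A -> A -> A) x y := succ x y + prec x y.

Definition AL1 (succ prec : A -> A -> A) := forall x y z,
  prec (circ succ prec x y) z = succ x (circ succ prec y z) - succ y (circ succ prec x z).
Definition AL2 (succ prec : A -> A -> A) := forall x y z,
  succ (circ succ prec x y) z = succ y (succ x z) - succ x (succ y z).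
Definition AL3 (succ prec : A -> A -> A) := forall x y z,
  prec x (circ succ prec y z) = prec (succ y x) z - succ y (prec x z).
Definition AL4 (succ prec : A -> A -> A) := forall x y z,
  prec (succ x y) z = - prec (prec y x) z.
Definition AN1 (succ prec : A -> A -> A) := forall x y z,
  succ (succ x y) z = - succ (prec y x) z.
Definition AN2 (succ prec : A -> A -> A) := forall x y z,
  prec x (prec y z) - prec y (prec x z) = 2%:R *: prec (prec x y) z - 2%:R *: prec (prec y x) z.
Definition AN3 (succ prec : A -> A -> A) := forall x y z,
  succ (succ x y) z + prec y (succ x z) = 2%:R *: succ x (circ succ prec y z).

Definition anti_pre_Leibniz (succ prec : A -> A -> A) :=
  AL1 succ prec /\ AL2 succ prec /\ AL3 succ prec /\ AL4 succ prec.
Definition admissible_Novikov_dialgebra (succ prec : A -> A -> A) :=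
  AL2 succ prec /\ AL3 succ prec /\ AL4 succ prec /\
  AN1 succ prec /\ AN2 succ prec /\ AN3 succ prec.

Definition vd_of (succ prec : A -> A -> A) x y := succ x y + 2%:R *: prec x y.
Definition dv_of (succ prec : A -> A -> A) x y := - prec y x - 2%:R *: succ y x.
End Identities.

From HB Require Import structures.
From Pilot Require Import Defs.
From mathcomp Require Import all_boot all_algebra ring.
Set Implicit Arguments. Unset Strict Implicit. Unset Printing Implicit Defensive.
Import GRing.Theory.
Local Open Scope ring_scope.

(* For each identity [lhs = rhs] write [lhs - rhs] for its defect.  Expanding
   [vd_of] and [dv_of] bilinearly, every defect of (ND1)-(ND5) is, modulo the
   anti-pre-Leibniz defects, a fixed linear combination of the defects of
   (AN1)-(AN3):
     ND1 = 2 AN2,  ND2 = 2 (AN3 - AN1),  ND3 = 2 AN1,  ND4 = - AN2,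
     ND5 = (AN1 - AN3 with x, y swapped, AN3 - AN1 - AN2).
   The first three relations can be inverted once 2 is invertible, which gives
   the equivalence; the last two then give (ND4) and (ND5). *)

Section SquareZeroExtension.
Variables (K : fieldType) (A : lmodType K).

(* The commutative ring K (+) A with A^2 = 0.  Embedding A into it turns each
   linear identity between products of vectors into a polynomial identity over
   a commutative ring, which the [ring] tactic decides. *)
Definition sqzext := (K * A)%type.
HB.instance Definition _ := GRing.Zmodule.on sqzext.

Definition sqzext_one : sqzext := (1, 0).
Definition sqzext_mul (u v : sqzext) : sqzext := (u.1 * v.1, u.1 *: v.2 + v.1 *: u.2).

Lemma sqzext_mulA : associative sqzext_mul.
Proof.
move=> [a x] [b y] [c z]; rewrite /sqzext_mul /=; congr pair; rewrite ?mulrA //.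
by rewrite !scalerDr !scalerA (mulrC c) (mulrC c b) addrA.
Qed.

Lemma sqzext_mulC : commutative sqzext_mul.
Proof. by move=> [a x] [b y]; rewrite /sqzext_mul /= mulrC addrC. Qed.

Lemma sqzext_mul1 : left_id sqzext_one sqzext_mul.
Proof. by move=> [a x]; rewrite /sqzext_mul /= mul1r scale1r scaler0 addr0. Qed.

Lemma sqzext_mulDl : left_distributive sqzext_mul +%R.
Proof.
move=> [a x] [b y] [c z]; rewrite /sqzext_mul /=; congr pair; rewrite ?mulrDl //.
by rewrite scalerDl scalerDr addrACA.
Qed.

Lemma sqzext_one_neq0 : sqzext_one != 0.
Proof. by apply/eqP => -[/eqP]; rewrite oner_eq0. Qed.

HB.instance Definition _ := GRing.Zmodule_isComNzRing.Build sqzext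
  sqzext_mulA sqzext_mulC sqzext_mul1 sqzext_mulDl sqzext_one_neq0.

Definition sqzext_vec (x : A) : sqzext := (0, x).
Definition sqzext_scal (c : K) : sqzext := (c, 0).

Lemma sqzext_vecD : {morph sqzext_vec : x y / x + y}.
Proof. by move=> x y; rewrite /sqzext_vec; congr pair; rewrite addr0. Qed.

Lemma sqzext_vecN : {morph sqzext_vec : x / - x}.
Proof. by move=> x; rewrite /sqzext_vec; congr pair; rewrite oppr0. Qed.

Lemma sqzext_scal_nat n : sqzext_scal n%:R = n%:R.
Proof.
elim: n => // n IH; rewrite -natr1 -[RHS]natr1 -IH /sqzext_scal.
by congr pair; rewrite /= addr0.
Qed.

Lemma sqzext_vecZ c x : sqzext_vec (c *: x) = sqzext_scal c * sqzext_vec x.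
Proof. by rewrite /GRing.mul /= /sqzext_mul /= mulr0 scaler0 addr0. Qed.

Lemma sqzext_vec_inj : injective sqzext_vec.
Proof. by move=> x y [->]. Qed.

End SquareZeroExtension.

Section BilinearMul.
Variables (K : fieldType) (A : lmodType K) (m : A -> A -> A).
Hypothesis hm : bilinear_mul m.

Lemma bimulDl x y z : m (x + y) z = m x z + m y z.
Proof. by rewrite -[x]scale1r (proj1 hm) !scale1r. Qed.

Lemma bimulDr x y z : m x (y + z) = m x y + m x z.
Proof. by rewrite -[y]scale1r (proj2 hm) !scale1r. Qed.

Lemma bimul0l z : m 0 z = 0.
Proof. by apply: (addrI (m 0 z)); rewrite -bimulDl !addr0. Qed.

Lemma bimul0r x : m x 0 = 0.
Proof. by apply: (addrI (m x 0)); rewrite -bimulDr !addr0. Qed.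

Lemma bimulZl c x z : m (c *: x) z = c *: m x z.
Proof. by rewrite -[c *: x]addr0 (proj1 hm) bimul0l addr0. Qed.

Lemma bimulZr c x z : m x (c *: z) = c *: m x z.
Proof. by rewrite -[c *: z]addr0 (proj2 hm) bimul0r addr0. Qed.

Lemma bimulNl x z : m (- x) z = - m x z.
Proof. by rewrite -scaleN1r bimulZl scaleN1r. Qed.

Lemma bimulNr x z : m x (- z) = - m x z.
Proof. by rewrite -scaleN1r bimulZr scaleN1r. Qed.

End BilinearMul.

Section Defects.
Variables (K : fieldType) (A : lmodType K) (succ prec : A -> A -> A).
Local Notation circ := (circ succ prec).
Local Notation vd := (vd_of succ prec).
Local Notation dv := (dv_of succ prec).

Definition AL1_defect x y z :=
  prec (circ x y) z - (succ x (circ y z) - succ y (circ x z)).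
Definition AL2_defect x y z :=
  succ (circ x y) z - (succ y (succ x z) - succ x (succ y z)).
Definition AL3_defect x y z :=
  prec x (circ y z) - (prec (succ y x) z - succ y (prec x z)).
Definition AL4_defect x y z := prec (succ x y) z - - prec (prec y x) z.
Definition AN1_defect x y z := succ (succ x y) z - - succ (prec y x) z.
Definition AN2_defect x y z :=
  (prec x (prec y z) - prec y (prec x z))
  - (2%:R *: prec (prec x y) z - 2%:R *: prec (prec y x) z).
Definition AN3_defect x y z :=
  (succ (succ x y) z + prec y (succ x z)) - 2%:R *: succ x (circ y z).
Definition ND1_defect x y z :=
  vd x (vd y z) - (vd (vd x y) z - vd (dv y x) z + vd y (vd x z)).
Definition ND2_defect x y z :=
  dv (vd y z) x - (vd y (dv z x) - dv z (vd y x) + dv (dv z y) x).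
Definition ND3_defect x y z := dv z (vd x y) - dv z (dv x y).
Definition ND4_defect x y z := dv (dv z y) x - dv (dv z x) y.
Definition ND5l_defect x y z := vd (dv y x) z - dv (vd y z) x.
Definition ND5r_defect x y z := dv (vd y z) x - vd (vd y x) z.

End Defects.

Lemma identity_defect0P (V : zmodType) (T : Type) (lhs rhs : T -> T -> T -> V) :
  (forall x y z, lhs x y z = rhs x y z) <->
  (forall x y z, lhs x y z - rhs x y z = 0).
Proof. by split=> h x y z; [rewrite h subrr | apply/subr0_eq/h]. Qed.

Section Transformation.
Variables (K : fieldType) (A : lmodType K) (succ prec : A -> A -> A).
Hypotheses (hs : bilinear_mul succ) (hp : bilinear_mul prec).
Hypothesis hAPL : anti_pre_Leibniz succ prec.
Local Notation vd := (vd_of succ prec).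
Local Notation dv := (dv_of succ prec).
Local Notation dAL1 := (AL1_defect succ prec).
Local Notation dAL2 := (AL2_defect succ prec).
Local Notation dAL3 := (AL3_defect succ prec).
Local Notation dAL4 := (AL4_defect succ prec).
Local Notation dAN1 := (AN1_defect succ prec).
Local Notation dAN2 := (AN2_defect prec).
Local Notation dAN3 := (AN3_defect succ prec).
Local Notation dND1 := (ND1_defect succ prec).
Local Notation dND2 := (ND2_defect succ prec).
Local Notation dND3 := (ND3_defect succ prec).
Local Notation dND4 := (ND4_defect succ prec).
Local Notation dND5l := (ND5l_defect succ prec).
Local Notation dND5r := (ND5r_defect succ prec).

(* The anti-pre-Leibniz coefficients in the certificates below are the
   solution of a linear system; [defect_ring] only checks them. *)
Ltac defect_ring :=
  rewrite /AL1_defect /AL2_defect /AL3_defect /AL4_defect /AN1_defect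
    /AN2_defect /AN3_defect /ND1_defect /ND2_defect /ND3_defect /ND4_defect
    /ND5l_defect /ND5r_defect /vd_of /dv_of /Defs.circ;
  rewrite ?(bimulDl hs, bimulDr hs, bimulZl hs, bimulZr hs, bimulNl hs, bimulNr hs,
            bimulDl hp, bimulDr hp, bimulZl hp, bimulZr hp, bimulNl hp, bimulNr hp);
  apply: (@sqzext_vec_inj K A);
  rewrite ?(sqzext_vecD, sqzext_vecN, sqzext_vecZ, sqzext_scal_nat); ring.

Let AL1_defect0 x y z : dAL1 x y z = 0.
Proof. by apply/eqP; rewrite subr_eq0; apply/eqP; case: hAPL. Qed.
Let AL2_defect0 x y z : dAL2 x y z = 0.
Proof. by apply/eqP; rewrite subr_eq0; apply/eqP; case: hAPL => _ []. Qed.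
Let AL3_defect0 x y z : dAL3 x y z = 0.
Proof. by apply/eqP; rewrite subr_eq0; apply/eqP; case: hAPL => _ [_ []]. Qed.
Let AL4_defect0 x y z : dAL4 x y z = 0.
Proof. by apply/eqP; rewrite subr_eq0; apply/eqP; case: hAPL => _ [_ [_]]. Qed.

Ltac drop_AL_defects := rewrite ?AL1_defect0 ?AL2_defect0 ?AL3_defect0 ?AL4_defect0
  ?scaler0 ?addr0 ?subr0.

Lemma ND1_defectE x y z : dND1 x y z = 2%:R *: dAN2 x y z.
Proof.
have -> : dND1 x y z = 2%:R *: dAN2 x y z
    - 2%:R *: dAL1 x y z + 2%:R *: dAL1 y x z - 3%:R *: dAL2 x y z
    + 2%:R *: dAL3 x y z - 2%:R *: dAL3 y x z - 6%:R *: dAL4 x y z.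
  by defect_ring.
by drop_AL_defects.
Qed.

Lemma ND2_defectE x y z : dND2 x y z = 2%:R *: (dAN3 x y z - dAN1 x y z).
Proof.
have -> : dND2 x y z = 2%:R *: (dAN3 x y z - dAN1 x y z)
    - 4%:R *: dAL1 y x z - 2%:R *: dAL2 y x z - 3%:R *: dAL3 x y z
    + 2%:R *: dAL3 y x z + 2%:R *: dAL4 x y z.
  by defect_ring.
by drop_AL_defects.
Qed.

Lemma ND3_defectE x y z : dND3 x y z = 2%:R *: dAN1 x y z.
Proof.
have -> : dND3 x y z = 2%:R *: dAN1 x y z
    - 2%:R *: dAL1 x y z - 2%:R *: dAL1 y x z - 4%:R *: dAL2 x y z
    - 4%:R *: dAL2 y x z + dAL4 x y z.
  by defect_ring.
by drop_AL_defects.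
Qed.

Lemma ND4_defectE x y z : dND4 x y z = - dAN2 x y z.
Proof.
have -> : dND4 x y z = - dAN2 x y z
    - 2%:R *: dAL1 x y z + 2%:R *: dAL1 y x z
    + 2%:R *: dAL3 x y z - 2%:R *: dAL3 y x z.
  by defect_ring.
by drop_AL_defects.
Qed.

Lemma ND5l_defectE x y z : dND5l x y z = dAN1 y x z - dAN3 y x z.
Proof.
have -> : dND5l x y z = dAN1 y x z - dAN3 y x z
    - dAL1 x y z + 3%:R *: dAL1 y x z - 2%:R *: dAL2 x y z
    + 2%:R *: dAL3 x y z - 3%:R *: dAL4 x y z - dAL4 y x z.
  by defect_ring.
by drop_AL_defects.
Qed.

Lemma ND5r_defectE x y z :
  dND5r x y z = dAN3 x y z - dAN1 x y z - dAN2 x y z.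
Proof.
have -> : dND5r x y z = dAN3 x y z - dAN1 x y z - dAN2 x y z
    - 2%:R *: dAL1 x y z - 3%:R *: dAL1 y x z - dAL2 y x z
    - dAL3 x y z - dAL3 y x z + dAL4 x y z.
  by defect_ring.
by drop_AL_defects.
Qed.

Lemma AN1_defect0P : AN1 succ prec <-> forall x y z, dAN1 x y z = 0.
Proof. exact: identity_defect0P. Qed.
Lemma AN2_defect0P : AN2 succ prec <-> forall x y z, dAN2 x y z = 0.
Proof. exact: identity_defect0P. Qed.
Lemma AN3_defect0P : AN3 succ prec <-> forall x y z, dAN3 x y z = 0.
Proof. exact: identity_defect0P. Qed.
Lemma ND1_defect0P : ND1 vd dv <-> forall x y z, dND1 x y z = 0.
Proof. exact: identity_defect0P. Qed.
Lemma ND2_defect0P : ND2 vd dv <-> forall x y z, dND2 x y z = 0.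
Proof. exact: identity_defect0P. Qed.
Lemma ND3_defect0P : ND3 vd dv <-> forall x y z, dND3 x y z = 0.
Proof. exact: identity_defect0P. Qed.
Lemma ND4_defect0P : ND4 vd dv <-> forall x y z, dND4 x y z = 0.
Proof. exact: identity_defect0P. Qed.

Lemma ND4_of_AN2 : AN2 succ prec -> ND4 vd dv.
Proof.
move/AN2_defect0P=> h2; apply/ND4_defect0P => x y z.
by rewrite ND4_defectE h2 oppr0.
Qed.

Lemma ND5_of_AN : AN1 succ prec -> AN2 succ prec -> AN3 succ prec -> ND5 vd dv.
Proof.
move=> /AN1_defect0P h1 /AN2_defect0P h2 /AN3_defect0P h3 x y z.
split; apply/subr0_eq.
  by apply: etrans (ND5l_defectE x y z) _; rewrite h1 h3 subrr.
by apply: etrans (ND5r_defectE x y z) _; rewrite h1 h2 h3 !subrr.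
Qed.

Section TwoInvertible.
Hypothesis two_neq0 : 2%:R != 0 :> K.

Lemma ND1_iff_AN2 : ND1 vd dv <-> AN2 succ prec.
Proof.
split=> [/ND1_defect0P h | /AN2_defect0P h].
  apply/AN2_defect0P => x y z; have e := ND1_defectE x y z.
  by rewrite h in e; apply: (scalerI two_neq0); rewrite -e scaler0.
by apply/ND1_defect0P => x y z; rewrite ND1_defectE h scaler0.
Qed.

Lemma ND3_iff_AN1 : ND3 vd dv <-> AN1 succ prec.
Proof.
split=> [/ND3_defect0P h | /AN1_defect0P h].
  apply/AN1_defect0P => x y z; have e := ND3_defectE x y z.
  by rewrite h in e; apply: (scalerI two_neq0); rewrite -e scaler0.
by apply/ND3_defect0P => x y z; rewrite ND3_defectE h scaler0.
Qed.

Lemma ND2_iff_AN3 : AN1 succ prec -> (ND2 vd dv <-> AN3 succ prec).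
Proof.
move/AN1_defect0P=> h1; split=> [/ND2_defect0P h | /AN3_defect0P h].
  apply/AN3_defect0P => x y z; have e := ND2_defectE x y z.
  by rewrite h h1 subr0 in e; apply: (scalerI two_neq0); rewrite -e scaler0.
by apply/ND2_defect0P => x y z; rewrite ND2_defectE h h1 subrr scaler0.
Qed.

End TwoInvertible.

End Transformation.

Theorem proposition3p6 (K : fieldType) (hchar : [pchar K] =i pred0)
  (A : lmodType K) (succ prec : A -> A -> A)
  (hsucc : bilinear_mul succ) (hprec : bilinear_mul prec)
  (hAPL : anti_pre_Leibniz succ prec) :
  (transformed_pre_Leibniz (vd_of succ prec) (dv_of succ prec) <->
     admissible_Novikov_dialgebra succ prec) /\
  (transformed_pre_Leibniz (vd_of succ prec) (dv_of succ prec) ->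
     Novikov_dialgebra (vd_of succ prec) (dv_of succ prec)).
Proof.
have two_neq0 : 2%:R != 0 :> K by rewrite (pcharf0P K).1.
have [_ [hAL2 [hAL3 hAL4]]] := hAPL.
have ND1_AN2 := ND1_iff_AN2 hsucc hprec hAPL two_neq0.
have ND2_AN3 := ND2_iff_AN3 hsucc hprec hAPL two_neq0.
have ND3_AN1 := ND3_iff_AN1 hsucc hprec hAPL two_neq0.
have admissible_of_ND :
    transformed_pre_Leibniz (vd_of succ prec) (dv_of succ prec) ->
    admissible_Novikov_dialgebra succ prec.
  case=> /ND1_AN2 hAN2 [hND2 /ND3_AN1 hAN1].
  by have /(ND2_AN3 hAN1) hAN3 := hND2.
have transformed_of_AN :
    admissible_Novikov_dialgebra succ prec ->
    transformed_pre_Leibniz (vd_of succ prec) (dv_of succ prec).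
  case=> _ [_ [_ [hAN1 [/ND1_AN2 hND1 /(ND2_AN3 hAN1) hND2]]]].
  by have /ND3_AN1 hND3 := hAN1.
split=> [|hND]; first by split.
have [hND1 [hND2 hND3]] := hND.
have [_ [_ [_ [hAN1 [hAN2 hAN3]]]]] := admissible_of_ND hND.
have hND4 := ND4_of_AN2 hsucc hprec hAPL hAN2.
have hND5 := ND5_of_AN hsucc hprec hAPL hAN1 hAN2 hAN3.
by [].
Qed.
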